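(* Let $p>0$, $e\ge 0$ and $\omega\in\mathbb{R}$, and let $\hat{\mathbf p}=(\cos\omega,\sin\omega)$. Let $\mathbf x_1,\mathbf x_2,\mathbf x_3\in\mathbb{R}^2$ be three distinct points of the form $\mathbf x_i=(x_i,y_i)=r_i(\cos\varphi_i,\sin\varphi_i)$ with $1+e\cos(\varphi_i-\omega)>0$ and $$r_i=\frac{p}{1+e\cos(\varphi_i-\omega)}\qquad(i=1,2,3),$$ so that $r_i=\sqrt{x_i^2+y_i^2}>0$ (i.e. the three points lie on the single branch, given by this polar equation, of a conic with a focus at the origin, semi-latus rectum $p$, eccentricity $e$ and periapsis direction $\hat{\mathbf p}$). Define $$\mathbf u_{123}=(r_1+r_2)\begin{bmatrix} r_2x_1-r_1x_2\\ r_2y_1-r_1y_2\\ r_1-r_2\end{bmatrix},\qquad \mathbf v_{123}=(r_1+r_3)\begin{bmatrix} r_3x_1-r_1x_3\\ r_3y_1-r_1y_3\\ r_1-r_3\end{bmatrix},$$ and $\mathbf s=(s_1,s_2,s_3)=\mathbf u_{123}\times\mathbf v_{123}$. Then $s_3\neq 0$, and setting $X=s_1/s_3$, $Y=s_2/s_3$ and $$Z^2=\frac{1}{r_1^2}\Big(1-2Xx_1-2Yy_1-Y^2x_1^2+2XYx_1y_1-X^2y_1^2\Big)$$ (equivalently $Z^2=r_1^{-2}\,\bar{\mathbf x}_1^T M\bar{\mathbf x}_1$ with $\bar{\mathbf x}_1=[x_1;y_1;1]$ and $M=\begin{bmatrix}-Y^2&XY&-X\\ XY&-X^2&-Y\\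 -X&-Y&1\end{bmatrix}$), one has $X^2+Y^2+Z^2>0$, $$p=\frac{1}{\sqrt{X^2+Y^2+Z^2}},\qquad e=\sqrt{\frac{X^2+Y^2}{X^2+Y^2+Z^2}},$$ and, if $e>0$, $\hat{\mathbf p}=(X,Y)/\sqrt{X^2+Y^2}$. Moreover, the three points lie on the conic $\{(x,y): [x;y;1]^T C[x;y;1]=0\}$ with $C=\begin{bmatrix}-(Y^2+Z^2)&XY&-X\\ XY&-(X^2+Z^2)&-Y\\ -X&-Y&1\end{bmatrix}$.
   Context: Points of $\mathbb{R}^2$ are identified with homogeneous coordinates $[x;y;1]$ in the projective plane. The cross product $\times$ is the usual cross product in $\mathbb{R}^3$. The polar equation $r=p/(1+e\cos\theta)$, with $\theta$ the angle from the periapsis direction $\hat{\mathbf p}$, describes a Keplerian orbit (ellipse, parabola, or one branch of a hyperbola) with focus at the origin. *)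

From Stdlib Require Import Reals.
Open Scope R_scope.

Definition vec3 := (R * R * R)%type.

Definition v1 (v : vec3) : R := fst (fst v).
Definition v2 (v : vec3) : R := snd (fst v).
Definition v3 (v : vec3) : R := snd v.

Definition scale3 (a : R) (v : vec3) : vec3 := (a * v1 v, a * v2 v, a * v3 v).

Definition cross (a b : vec3) : vec3 :=
  (v2 a * v3 b - v3 a * v2 b,
   v3 a * v1 b - v1 a * v3 b,
   v1 a * v2 b - v2 a * v1 b).

Definition dot3 (a b : vec3) : R := v1 a * v1 b + v2 a * v2 b + v3 a * v3 b.

Definition mat3 := (vec3 * vec3 * vec3)%type.
Definition mulmv3 (M : mat3) (v : vec3) : vec3 :=
  (dot3 (fst (fst M)) v, dot3 (snd (fst M)) v, dot3 (snd M) v).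

Definition quad3 (M : mat3) (v : vec3) : R := dot3 v (mulmv3 M v).

Definition hom (x y : R) : vec3 := (x, y, 1).

Definition uvec (xi yi ri xj yj rj : R) : vec3 :=
  scale3 (ri + rj) (rj * xi - ri * xj, rj * yi - ri * yj, ri - rj).

Definition conicC (X Y Z2 : R) : mat3 :=
  ((-(Y^2 + Z2), X * Y, - X),
   (X * Y, -(X^2 + Z2), - Y),
   (- X, - Y, 1)).

From Stdlib Require Import Reals Lra Psatz Nsatz.
Open Scope R_scope.

(* With (a, b) := e (cos ω, sin ω), the polar equation says r = p - a x - b y:
   the lifted points (x_i, y_i, r_i) lie on the plane a x + b y + r = p.  The
   normal (a, b, p) is then orthogonal to u_123 and v_123, so their cross
   product is parallel to it and X = a / p, Y = b / p.  Squaring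
   r = p - a x - b y and using r^2 = x^2 + y^2 puts every point of the branch
   on the conic C with Z^2 = (1 - e^2) / p^2, which is therefore the value
   forced by x_1; hence X^2 + Y^2 + Z^2 = 1 / p^2 and X^2 + Y^2 = e^2 / p^2.
   Finally s_3 != 0: distinct points of the branch have distinct directions,
   and three distinct points of the unit circle are never collinear. *)

Lemma cross_parallel_of_orthogonal (n u v : vec3) :
  dot3 n u = 0 -> dot3 n v = 0 ->
  v1 (cross u v) * v3 n = v3 (cross u v) * v1 n /\
  v2 (cross u v) * v3 n = v3 (cross u v) * v2 n.
Proof.
  destruct n as [[n1 n2] n3], u as [[u1 u2] u3], v as [[w1 w2] w3].
  unfold dot3, cross, v1, v2, v3; simpl; intros Hu Hv; split; nsatz.
Qed.

Lemma dot3_uvec_eq0 (p a b xi yi ri xj yj rj : R) :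
  ri = p - a * xi - b * yi -> rj = p - a * xj - b * yj ->
  dot3 (a, b, p) (uvec xi yi ri xj yj rj) = 0.
Proof. intros -> ->; unfold dot3, uvec, scale3, v1, v2, v3; simpl; ring. Qed.

Definition twice_signed_area (x1 y1 x2 y2 x3 y3 : R) : R :=
  (x1 - x2) * (y1 - y3) - (y1 - y2) * (x1 - x3).

Lemma v3_cross_uvec_polar (r1 r2 r3 c1 s1 c2 s2 c3 s3 : R) :
  v3 (cross (uvec (r1 * c1) (r1 * s1) r1 (r2 * c2) (r2 * s2) r2)
            (uvec (r1 * c1) (r1 * s1) r1 (r3 * c3) (r3 * s3) r3))
  = (r1 + r2) * (r1 + r3) * r1 ^ 2 * r2 * r3 * twice_signed_area c1 s1 c2 s2 c3 s3.
Proof. unfold cross, uvec, scale3, twice_signed_area, v1, v2, v3; simpl; ring. Qed.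

(* The circumradius formula  area = (product of the sides) / (4 R)  with R = 1. *)
Lemma twice_signed_area_unit_circle_sqr (c1 s1 c2 s2 c3 s3 : R) :
  c1 ^ 2 + s1 ^ 2 = 1 -> c2 ^ 2 + s2 ^ 2 = 1 -> c3 ^ 2 + s3 ^ 2 = 1 ->
  4 * twice_signed_area c1 s1 c2 s2 c3 s3 ^ 2 =
  ((c1 - c2) ^ 2 + (s1 - s2) ^ 2) * ((c1 - c3) ^ 2 + (s1 - s3) ^ 2)
  * ((c2 - c3) ^ 2 + (s2 - s3) ^ 2).
Proof. unfold twice_signed_area; intros; simpl in *; nsatz. Qed.

Lemma sqr_dist_pos (x1 y1 x2 y2 : R) :
  (x1, y1) <> (x2, y2) -> 0 < (x1 - x2) ^ 2 + (y1 - y2) ^ 2.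
Proof.
  intros d; pose proof (pow2_ge_0 (x1 - x2)); pose proof (pow2_ge_0 (y1 - y2)).
  destruct (Rle_lt_dec ((x1 - x2) ^ 2 + (y1 - y2) ^ 2) 0); [| assumption].
  exfalso; apply d; f_equal; nra.
Qed.

Lemma twice_signed_area_unit_circle_neq0 (c1 s1 c2 s2 c3 s3 : R) :
  c1 ^ 2 + s1 ^ 2 = 1 -> c2 ^ 2 + s2 ^ 2 = 1 -> c3 ^ 2 + s3 ^ 2 = 1 ->
  (c1, s1) <> (c2, s2) -> (c1, s1) <> (c3, s3) -> (c2, s2) <> (c3, s3) ->
  twice_signed_area c1 s1 c2 s2 c3 s3 <> 0.
Proof.
  intros h1 h2 h3 d12 d13 d23 A0.
  pose proof (twice_signed_area_unit_circle_sqr c1 s1 c2 s2 c3 s3 h1 h2 h3) as E.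
  rewrite A0 in E.
  pose proof (Rmult_lt_0_compat _ _ (Rmult_lt_0_compat _ _
    (sqr_dist_pos _ _ _ _ d12) (sqr_dist_pos _ _ _ _ d13)) (sqr_dist_pos _ _ _ _ d23)).
  lra.
Qed.

Lemma v3_cross_uvec_polar_neq0 (r1 r2 r3 c1 s1 c2 s2 c3 s3 : R) :
  0 < r1 -> 0 < r2 -> 0 < r3 ->
  c1 ^ 2 + s1 ^ 2 = 1 -> c2 ^ 2 + s2 ^ 2 = 1 -> c3 ^ 2 + s3 ^ 2 = 1 ->
  (c1, s1) <> (c2, s2) -> (c1, s1) <> (c3, s3) -> (c2, s2) <> (c3, s3) ->
  v3 (cross (uvec (r1 * c1) (r1 * s1) r1 (r2 * c2) (r2 * s2) r2)
            (uvec (r1 * c1) (r1 * s1) r1 (r3 * c3) (r3 * s3) r3)) <> 0.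
Proof.
  intros hr1 hr2 hr3 h1 h2 h3 d12 d13 d23.
  rewrite v3_cross_uvec_polar.
  apply Rmult_integral_contrapositive_currified.
  - apply Rgt_not_eq; repeat apply Rmult_lt_0_compat; try apply pow_lt; lra.
  - exact (twice_signed_area_unit_circle_neq0 _ _ _ _ _ _ h1 h2 h3 d12 d13 d23).
Qed.

Lemma quad3_conicC_hom (X Y Z2 x y : R) :
  quad3 (conicC X Y Z2) (hom x y) =
  1 - 2 * X * x - 2 * Y * y - Y ^ 2 * x ^ 2 + 2 * X * Y * x * y - X ^ 2 * y ^ 2
  - Z2 * (x ^ 2 + y ^ 2).
Proof. unfold quad3, conicC, mulmv3, dot3, hom, v1, v2, v3; simpl; ring. Qed.

Section FocalConic.

Variables p e a b : R.
Hypothesis p_neq0 : p <> 0.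
Hypothesis ab_norm : a ^ 2 + b ^ 2 = e ^ 2.

(* Lagrange's identity (a^2 + b^2)(x^2 + y^2) = (a x + b y)^2 + (b x - a y)^2
   turns the right-hand side into a difference of two squares. *)
Lemma focal_conicC_quad3 (x y : R) :
  p ^ 2 * quad3 (conicC (a / p) (b / p) ((1 - e ^ 2) / p ^ 2)) (hom x y) =
  (p - a * x - b * y) ^ 2 - (x ^ 2 + y ^ 2).
Proof. rewrite quad3_conicC_hom, <- ab_norm; field; exact p_neq0. Qed.

Lemma focal_point_on_conicC (x y r : R) :
  r = p - a * x - b * y -> r ^ 2 = x ^ 2 + y ^ 2 ->
  quad3 (conicC (a / p) (b / p) ((1 - e ^ 2) / p ^ 2)) (hom x y) = 0.
Proof.
  intros Hr Hn; apply (Rmult_eq_reg_l (p ^ 2)); [| apply pow_nonzero, p_neq0].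
  rewrite focal_conicC_quad3, <- Hr, Hn; ring.
Qed.

Lemma focal_conic_Z2 (x y r : R) :
  r <> 0 -> r = p - a * x - b * y -> r ^ 2 = x ^ 2 + y ^ 2 ->
  / r ^ 2 * (1 - 2 * (a / p) * x - 2 * (b / p) * y - (b / p) ^ 2 * x ^ 2
             + 2 * (a / p) * (b / p) * x * y - (a / p) ^ 2 * y ^ 2)
  = (1 - e ^ 2) / p ^ 2.
Proof.
  intros hr Hr Hn.
  pose proof (focal_point_on_conicC x y r Hr Hn) as on_conic.
  rewrite quad3_conicC_hom, <- Hn in on_conic.
  match goal with |- _ * ?q = _ => replace q with ((1 - e ^ 2) / p ^ 2 * r ^ 2) by lra end.
  field; auto.
Qed.

Lemma focal_cross_direction (x1 y1 r1 x2 y2 r2 x3 y3 r3 : R) :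
  r1 = p - a * x1 - b * y1 -> r2 = p - a * x2 - b * y2 -> r3 = p - a * x3 - b * y3 ->
  let s := cross (uvec x1 y1 r1 x2 y2 r2) (uvec x1 y1 r1 x3 y3 r3) in
  v3 s <> 0 -> v1 s / v3 s = a / p /\ v2 s / v3 s = b / p.
Proof.
  intros H1 H2 H3 s hs.
  destruct (cross_parallel_of_orthogonal (a, b, p) _ _
              (dot3_uvec_eq0 _ _ _ _ _ _ _ _ _ H1 H2)
              (dot3_uvec_eq0 _ _ _ _ _ _ _ _ _ H1 H3)) as [E1 E2].
  fold s in E1, E2; change (v3 (a, b, p)) with p in E1, E2.
  change (v1 (a, b, p)) with a in E1; change (v2 (a, b, p)) with b in E2.
  split; field_simplify_eq; auto; lra.
Qed.

End FocalConic.

Lemma unit_circle_pow2 (phi : R) : cos phi ^ 2 + sin phi ^ 2 = 1.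
Proof. rewrite <- (sin2_cos2 phi); unfold Rsqr; ring. Qed.

Lemma focal_parameters_recovery (p e om : R) :
  0 < p -> 0 <= e ->
  let X := e * cos om / p in
  let Y := e * sin om / p in
  let Z2 := (1 - e ^ 2) / p ^ 2 in
  0 < X ^ 2 + Y ^ 2 + Z2 /\
  p = 1 / sqrt (X ^ 2 + Y ^ 2 + Z2) /\
  e = sqrt ((X ^ 2 + Y ^ 2) / (X ^ 2 + Y ^ 2 + Z2)) /\
  (0 < e -> (cos om, sin om) =
             (X / sqrt (X ^ 2 + Y ^ 2), Y / sqrt (X ^ 2 + Y ^ 2))).
Proof.
  intros hp he X Y Z2.
  assert (HXY : X ^ 2 + Y ^ 2 = (e / p) ^ 2)
    by (unfold X, Y; rewrite <- (Rmult_1_r ((e / p) ^ 2)), <- (unit_circle_pow2 om);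
        field; lra).
  assert (Hsum : X ^ 2 + Y ^ 2 + Z2 = (1 / p) ^ 2) by (rewrite HXY; unfold Z2; field; lra).
  rewrite Hsum, HXY.
  split; [apply pow_lt, Rdiv_lt_0_compat; lra |].
  split; [rewrite sqrt_pow2; [field | apply Rlt_le, Rdiv_lt_0_compat]; lra |].
  split.
  - replace ((e / p) ^ 2 / (1 / p) ^ 2) with (e ^ 2) by (field; lra).
    rewrite sqrt_pow2; lra.
  - intros e_pos; rewrite sqrt_pow2 by (apply Rlt_le, Rdiv_lt_0_compat; lra).
    unfold X, Y; f_equal; field; lra.
Qed.

Lemma polar_point_focal (p e om phi : R) :
  0 < 1 + e * cos (phi - om) ->
  let r := p / (1 + e * cos (phi - om)) in
  r = p - e * cos om * (r * cos phi) - e * sin om * (r * sin phi).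
Proof. intros h r; unfold r; rewrite cos_minus in *; field; lra. Qed.

Lemma polar_point_norm (r phi : R) : r ^ 2 = (r * cos phi) ^ 2 + (r * sin phi) ^ 2.
Proof. rewrite <- (Rmult_1_r (r ^ 2)), <- (unit_circle_pow2 phi); ring. Qed.

Lemma polar_point_eq_of_direction (p e om phi psi : R) :
  (cos phi, sin phi) = (cos psi, sin psi) ->
  (p / (1 + e * cos (phi - om)) * cos phi, p / (1 + e * cos (phi - om)) * sin phi) =
  (p / (1 + e * cos (psi - om)) * cos psi, p / (1 + e * cos (psi - om)) * sin psi).
Proof. intros E; injection E as Ec Es; rewrite !cos_minus, Ec, Es; reflexivity. Qed.

Theorem mainTheorem1 (p e om phi1 phi2 phi3 : R)
  (hp : 0 < p) (he : 0 <= e)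
  (h1 : 0 < 1 + e * cos (phi1 - om))
  (h2 : 0 < 1 + e * cos (phi2 - om))
  (h3 : 0 < 1 + e * cos (phi3 - om)) :
  let r1 := p / (1 + e * cos (phi1 - om)) in
  let r2 := p / (1 + e * cos (phi2 - om)) in
  let r3 := p / (1 + e * cos (phi3 - om)) in
  let x1 := r1 * cos phi1 in let y1 := r1 * sin phi1 in
  let x2 := r2 * cos phi2 in let y2 := r2 * sin phi2 in
  let x3 := r3 * cos phi3 in let y3 := r3 * sin phi3 in
  (x1, y1) <> (x2, y2) -> (x1, y1) <> (x3, y3) -> (x2, y2) <> (x3, y3) ->
  let u := uvec x1 y1 r1 x2 y2 r2 in
  let v := uvec x1 y1 r1 x3 y3 r3 in
  let s := cross u v in
  v3 s <> 0 /\
  let X := v1 s / v3 s in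
  let Y := v2 s / v3 s in
  let Z2 := / r1 ^ 2 *
      (1 - 2 * X * x1 - 2 * Y * y1 - Y ^ 2 * x1 ^ 2
         + 2 * X * Y * x1 * y1 - X ^ 2 * y1 ^ 2) in
  0 < X ^ 2 + Y ^ 2 + Z2 /\
  p = 1 / sqrt (X ^ 2 + Y ^ 2 + Z2) /\
  e = sqrt ((X ^ 2 + Y ^ 2) / (X ^ 2 + Y ^ 2 + Z2)) /\
  (0 < e -> (cos om, sin om) =
             (X / sqrt (X ^ 2 + Y ^ 2), Y / sqrt (X ^ 2 + Y ^ 2))) /\
  quad3 (conicC X Y Z2) (hom x1 y1) = 0 /\
  quad3 (conicC X Y Z2) (hom x2 y2) = 0 /\
  quad3 (conicC X Y Z2) (hom x3 y3) = 0.
Proof.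
  intros r1 r2 r3 x1 y1 x2 y2 x3 y3 d12 d13 d23 u v s.
  assert (L1 : r1 = p - e * cos om * x1 - e * sin om * y1) by exact (polar_point_focal p e om phi1 h1).
  assert (L2 : r2 = p - e * cos om * x2 - e * sin om * y2) by exact (polar_point_focal p e om phi2 h2).
  assert (L3 : r3 = p - e * cos om * x3 - e * sin om * y3) by exact (polar_point_focal p e om phi3 h3).
  assert (N1 : r1 ^ 2 = x1 ^ 2 + y1 ^ 2) by apply polar_point_norm.
  assert (N2 : r2 ^ 2 = x2 ^ 2 + y2 ^ 2) by apply polar_point_norm.
  assert (N3 : r3 ^ 2 = x3 ^ 2 + y3 ^ 2) by apply polar_point_norm.
  assert (ab_norm : (e * cos om) ^ 2 + (e * sin om) ^ 2 = e ^ 2)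
    by (rewrite <- (Rmult_1_r (e ^ 2)), <- (unit_circle_pow2 om); ring).
  assert (r1_pos : 0 < r1) by (apply Rdiv_lt_0_compat; assumption).
  assert (r2_pos : 0 < r2) by (apply Rdiv_lt_0_compat; assumption).
  assert (r3_pos : 0 < r3) by (apply Rdiv_lt_0_compat; assumption).
  assert (s3 : v3 s <> 0).
  { apply v3_cross_uvec_polar_neq0; try assumption; try apply unit_circle_pow2; intro E; [apply d12 | apply d13 | apply d23]; exact (polar_point_eq_of_direction p e om _ _ E). }
  split; [exact s3 |].
  assert (XY : v1 s / v3 s = e * cos om / p /\ v2 s / v3 s = e * sin om / p)
    by exact (focal_cross_direction p _ _ ltac:(lra) _ _ _ _ _ _ _ _ _ L1 L2 L3 s3).
  destruct XY as [-> ->]; intros X Y Z2.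
  assert (HZ : Z2 = (1 - e ^ 2) / p ^ 2)
    by exact (focal_conic_Z2 p e _ _ ltac:(lra) ab_norm x1 y1 r1 ltac:(lra) L1 N1).
  clearbody Z2; subst Z2.
  destruct (focal_parameters_recovery p e om hp he) as (pos & p_eq & e_eq & dir).
  do 4 (split; [assumption |]).
  split; [| split]; eapply focal_point_on_conicC; eauto; lra.
Qed.
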